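(* Let $\eta^{ij}$ ($1\le i,j\le N$) be a constant nondegenerate symmetric matrix, let $c\neq 0$ be a constant, set $L=N$ and $\mu^{ij}=c\,\eta^{ij}$, and let $\Phi(u^1,\dots,u^N)$ be a function with $\psi_\alpha=\partial\Phi/\partial u^\alpha$, $1\le\alpha\le N$. Then the system $$\sum_{\alpha,\beta=1}^N\mu^{\alpha\beta}\Big(\frac{\partial^2\psi_\alpha}{\partial u^i\partial u^k}\frac{\partial^2\psi_\beta}{\partial u^j\partial u^l}-\frac{\partial^2\psi_\alpha}{\partial u^i\partial u^l}\frac{\partial^2\psi_\beta}{\partial u^j\partial u^k}\Big)=0\quad(\text{all } i,j,k,l)$$ (Gauss equations) and the system $$\sum_{i,j=1}^N\eta^{ij}\Big(\frac{\partial^2\psi_\alpha}{\partial u^i\partial u^k}\frac{\partial^2\psi_\beta}{\partial u^j\partial u^l}-\frac{\partial^2\psi_\alpha}{\partial u^i\partial u^l}\frac{\partial^2\psi_\beta}{\partial u^j\partial u^k}\Big)=0\quad(\text{all } \alpha,\beta,k,l)$$ (Ricci equations) coincide with each other, and both coincide with the associativity equations $$\sum_{i,j=1}^N\eta^{ij}\Big(\frac{\partial^3\Phi}{\partial u^i\partial u^m\partial u^k}\frac{\partial^3\Phi}{\partial u^j\partial u^n\partial u^l}-\frac{\partial^3\Phi}{\partial u^i\partial u^m\partial u^l}\frac{\partial^3\Phi}{\partial u^j\partial u^n\partial u^k}\Big)=0\quad\text{for all } m,n,k,l.$$ *)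

From HB Require Import structures.
From mathcomp Require Import all_boot all_order all_algebra.
From mathcomp Require Import all_classical all_reals all_analysis.
Set Implicit Arguments. Unset Strict Implicit. Unset Printing Implicit Defensive.
Import Order.TTheory GRing.Theory Num.Theory.
Import numFieldNormedType.Exports.
Local Open Scope ring_scope.
Local Open Scope classical_set_scope.

Definition ebasis {R : realType} {N : nat} (i : 'I_N) : 'rV[R]_N := delta_mx 0 i.

Definition pd {R : realType} {N : nat} (i : 'I_N) (f : 'rV[R]_N -> R) : 'rV[R]_N -> R :=
  fun u => derive f u (ebasis i).

(* iterated partial derivative: iter_pd [:: i1; ...; ik] f = d_i1 ( ... (d_ik f)) *)
Definition iter_pd {R : realType} {N : nat} (s : seq 'I_N) (f : 'rV[R]_N -> R) :
  'rV[R]_N -> R := foldr (fun i g => pd i g) f s.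

Definition Ck_on {R : realType} {N : nat} (k : nat) (U : set 'rV[R]_N)
  (f : 'rV[R]_N -> R) : Prop :=
  forall s : seq 'I_N, forall u, U u ->
    ((size s <= k)%N -> {for u, continuous (iter_pd s f)}) /\
    ((size s < k)%N -> forall i : 'I_N, derivable (iter_pd s f) u (ebasis i)).

(* The third derivatives T x y z := d_x d_y d_z Phi at u are totally symmetric.
   Symmetry in the last two slots holds because d_y d_z Phi = d_z d_y Phi on
   the open set U, and symmetry in the first two slots is Schwarz's theorem for
   d_z Phi; Schwarz's theorem itself is proved by applying the mean value
   theorem twice to the second difference of f along v and w, in either order.
   Since every coefficient d_i d_k psi_a equals T i k a, the Gauss sum for
   mu = c eta is c times the Ricci sum read with (i, j) and (a, b) exchanged,
   and the Ricci sum is the associativity sum once i and j are exchanged in its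
   second product, which uses eta^T = eta. *)

From HB Require Import structures.
From mathcomp Require Import all_boot all_order all_algebra.
From mathcomp Require Import all_classical all_reals all_analysis.
From mathcomp Require Import lra.
Set Implicit Arguments. Unset Strict Implicit. Unset Printing Implicit Defensive.
Import Order.TTheory GRing.Theory Num.Theory.
Import numFieldNormedType.Exports.
Local Open Scope ring_scope.
Local Open Scope classical_set_scope.

Section Schwarz.
Variables (R : realType) (V : normedModType R).

Lemma is_derive_along_line (f : V -> R) (x v : V) (t : R) :
  derivable f (x + t *: v) v ->
  is_derive t 1 (fun s => f (x + s *: v)) ('D_v f (x + t *: v)).
Proof.
have quotientE : (fun h : R => h^-1 *: (((fun s => f (x + s *: v)) \o shift t) (h *: 1)
       - (fun s => f (x + s *: v)) t)) =
   (fun h : R => h^-1 *: ((f \o shift (x + t *: v)) (h *: v) - f (x + t *: v))).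
  by apply/funext => h /=; rewrite [h%:A]mulr1 scalerDl addrCA.
by move=> df; apply: DeriveDef; rewrite /derivable /derive quotientE.
Qed.

Lemma MVT_is_derive (g dg : R -> R) (a b : R) : a < b ->
  (forall x, a <= x <= b -> is_derive x 1 g (dg x)) ->
  exists2 c, a < c < b & g b - g a = dg c * (b - a).
Proof.
move=> ab dg_g.
have dg_itv x : x \in `]a, b[%R -> is_derive x 1 g (dg x).
  by rewrite in_itv /= => /andP[ax xb]; apply: dg_g; lra.
have g_cont : {within `[a, b], continuous g}.
  apply: derivable_within_continuous => x; rewrite in_itv /= => /andP[ax xb].
  by have [] := dg_g x ltac:(lra).
by have [c] := MVT ab dg_itv g_cont; rewrite in_itv /=; exists c.
Qed.

Definition second_diff (f : V -> R) (u v w : V) (d : R) :=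
  f (u + d *: v + d *: w) - f (u + d *: v) - f (u + d *: w) + f u.

Lemma second_diffC f u v w d : second_diff f u v w d = second_diff f u w v d.
Proof. rewrite /second_diff [u + d *: w + _]addrAC; lra. Qed.

Lemma second_diff_MVT (f : V -> R) (u v w : V) (d : R) : 0 < d ->
  (forall s t, 0 <= s <= d -> 0 <= t <= d ->
     derivable f (u + s *: v + t *: w) v /\
     derivable ('D_v f) (u + s *: v + t *: w) w) ->
  exists s t, [/\ 0 <= s <= d, 0 <= t <= d &
    second_diff f u v w d = d * d * 'D_w ('D_v f) (u + s *: v + t *: w)].
Proof.
move=> d0 df.
pose g s := f (u + d *: w + s *: v) - f (u + s *: v).
pose dg s := 'D_v f (u + d *: w + s *: v) - 'D_v f (u + s *: v).
have dg_g s : 0 <= s <= d -> is_derive s 1 g (dg s).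
  move=> s0d; apply: is_deriveB; apply: is_derive_along_line.
    by rewrite addrAC; apply: (df s d s0d _).1; lra.
  by have := (df s 0 s0d _).1; rewrite scale0r addr0; apply; lra.
have [s s0d Es] := @MVT_is_derive g dg 0 d d0 dg_g.
pose h t := 'D_v f (u + s *: v + t *: w).
have dh_h t : 0 <= t <= d -> is_derive t 1 h ('D_w ('D_v f) (u + s *: v + t *: w)).
  by move=> t0d; apply: is_derive_along_line; apply: (df s t _ t0d).2; lra.
have [t t0d Et] := @MVT_is_derive h _ 0 d d0 dh_h.
exists s, t; split; try lra.
have -> : second_diff f u v w d = g d - g 0.
  by rewrite /g /second_diff !scale0r !addr0 [u + d *: w + _]addrAC; lra.
have dgE : dg s = h d - h 0 by rewrite /dg /h scale0r addr0 [u + d *: w + _]addrAC.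
by rewrite Es dgE Et !subr0 -mulrA mulrC.
Qed.

Lemma ball_parallelogram (u a b : V) (r d s t : R) :
  d * (`|a| + `|b|) < r -> 0 <= s <= d -> 0 <= t <= d ->
  ball_ Num.norm u r (u + s *: a + t *: b).
Proof.
move=> dr s0d t0d; rewrite /= -addrA opprD addrA subrr sub0r normrN.
apply: le_lt_trans (ler_normD _ _) _; rewrite !normrZ !ger0_norm; try lra.
case/andP: s0d => _ sd; case/andP: t0d => _ td.
have := ler_wpM2r (normr_ge0 a) sd; have := ler_wpM2r (normr_ge0 b) td.
by rewrite mulrDr in dr; lra.
Qed.

Lemma schwarz (f : V -> R) (u v w : V) :
  (\forall y \near u, [/\ derivable f y v, derivable f y w,
      derivable ('D_v f) y w & derivable ('D_w f) y v]) ->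
  {for u, continuous ('D_w ('D_v f))} -> {for u, continuous ('D_v ('D_w f))} ->
  'D_w ('D_v f) u = 'D_v ('D_w f) u.
Proof.
move=> df cvw cwv; apply/eqP; rewrite -subr_eq0 -normr_le0.
apply/ler_addgt0Pr => e e0; rewrite add0r; apply/ltW.
have e20 : 0 < e / 2 by rewrite divr_gt0.
have cvw_e : \forall y \near u, `|'D_w ('D_v f) u - 'D_w ('D_v f) y| < e / 2.
  exact: (cvgrPdist_lt _ _).1 cvw _ e20.
have cwv_e : \forall y \near u, `|'D_v ('D_w f) u - 'D_v ('D_w f) y| < e / 2.
  exact: (cvgrPdist_lt _ _).1 cwv _ e20.
have near_u := @filterI _ _ (nbhs_filter u) _ _ df
  (@filterI _ _ (nbhs_filter u) _ _ cvw_e cwv_e).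
have [r /= r0 near_r] := (nbhs_normP _ _).1 near_u.
pose d := r / (`|v| + `|w| + 1).
have norms_gt0 : 0 < `|v| + `|w| + 1.
  by have := normr_ge0 v; have := normr_ge0 w; lra.
have d0 : 0 < d by rewrite divr_gt0.
have dr : d * (`|v| + `|w|) < r.
  by rewrite /d mulrAC ltr_pdivrMr // ltr_pM2l // ltrDl.
have dr' : d * (`|w| + `|v|) < r by rewrite addrC.
have [s1 [t1 [s1d t1d E1]]] := @second_diff_MVT f u v w d d0 (fun s t s0d t0d =>
  let: conj (And4 df_v _ dvf_w _) _ := near_r _ (ball_parallelogram u dr s0d t0d) in
  conj df_v dvf_w).
have [s2 [t2 [s2d t2d E2]]] := @second_diff_MVT f u w v d d0 (fun s t s0d t0d =>
  let: conj (And4 _ df_w _ dwf_v) _ := near_r _ (ball_parallelogram u dr' s0d t0d) in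
  conj df_w dwf_v).
(* Both mixed derivatives, at points of the ball, equal the same second
   difference divided by d^2. *)
have mixed_eq : 'D_w ('D_v f) (u + s1 *: v + t1 *: w) =
                'D_v ('D_w f) (u + s2 *: w + t2 *: v).
  apply: (mulfI (x := d * d)); first by rewrite mulf_neq0 ?gt_eqF.
  by rewrite -E1 -E2 second_diffC.
have [_ [close1 _]] := near_r _ (ball_parallelogram u dr s1d t1d).
have [_ [_ close2]] := near_r _ (ball_parallelogram u dr' s2d t2d).
rewrite -mixed_eq distrC in close2.
apply: le_lt_trans (ler_distD ('D_w ('D_v f) (u + s1 *: v + t1 *: w)) _ _) _.
by rewrite [e]splitr; apply: ltrD close1 close2.
Qed.

End Schwarz.

Section PartialDerivatives.
Variables (R : realType) (N : nat) (U : set 'rV[R]_N).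
Hypothesis oU : open U.

Lemma Ck_on_le (k m : nat) (f : 'rV[R]_N -> R) :
  (k <= m)%N -> Ck_on m U f -> Ck_on k U f.
Proof.
move=> km fC s p Up; have [cont der] := fC s p Up.
by split=> hs; [apply: cont | apply: der]; apply: leq_trans hs km.
Qed.

Lemma Ck_on_pd (k : nat) (f : 'rV[R]_N -> R) (i : 'I_N) :
  Ck_on k.+1 U f -> Ck_on k U (pd i f).
Proof.
move=> fC s p Up; have := fC (rcons s i) p Up.
by rewrite /iter_pd foldr_rcons size_rcons.
Qed.

Lemma Ck_on2_pdC (f : 'rV[R]_N -> R) (i j : 'I_N) (p : 'rV[R]_N) :
  Ck_on 2 U f -> U p -> pd i (pd j f) p = pd j (pd i f) p.
Proof.
move=> fC Up; apply: schwarz; last 2 first.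
- exact: (fC [:: i; j] p Up).1.
- exact: (fC [:: j; i] p Up).1.
apply: filterS (open_nbhs_nbhs (conj oU Up)) => q Uq.
by split; [exact: (fC [::] q Uq).2 | exact: (fC [::] q Uq).2
          | exact: (fC [:: j] q Uq).2 | exact: (fC [:: i] q Uq).2].
Qed.

Lemma Ck_on3_pdC13 (f : 'rV[R]_N -> R) (x y z : 'I_N) (u : 'rV[R]_N) :
  Ck_on 3 U f -> U u -> pd x (pd y (pd z f)) u = pd z (pd y (pd x f)) u.
Proof.
move=> fC Uu.
have C12 a b c : pd a (pd b (pd c f)) u = pd b (pd a (pd c f)) u.
  exact: Ck_on2_pdC (Ck_on_pd c fC) Uu.
have C23 a b c : pd a (pd b (pd c f)) u = pd a (pd c (pd b f)) u.
  apply: near_eq_derive; apply: filterS (open_nbhs_nbhs (conj oU Uu)) => q Uq.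
  exact: Ck_on2_pdC (Ck_on_le _ fC) Uq.
by rewrite C12 C23 C12.
Qed.

End PartialDerivatives.

Section AssociativityEquations.
Variable N : nat.

Lemma gauss_sum_ricci (F : comRingType) (eta : 'M[F]_N) (c : F)
    (T : 'I_N -> 'I_N -> 'I_N -> F) :
    (forall x y z, T x y z = T z y x) -> forall i j k l,
  \sum_(a < N) \sum_(b < N) (c *: eta) a b *
     (T i k a * T j l b - T i l a * T j k b) =
  c * \sum_(a < N) \sum_(b < N) eta a b *
     (T a k i * T b l j - T a l i * T b k j).
Proof.
move=> TC i j k l; rewrite big_distrr; apply: eq_bigr => a _.
rewrite big_distrr; apply: eq_bigr => b _.
by rewrite mxE (TC i k a) (TC j l b) (TC i l a) (TC j k b) -mulrA.
Qed.

Lemma ricci_sum_assoc (F : comRingType) (eta : 'M[F]_N)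
    (T : 'I_N -> 'I_N -> 'I_N -> F) : eta^T = eta -> forall a b k l,
  \sum_(i < N) \sum_(j < N) eta i j *
     (T i k a * T j l b - T i l a * T j k b) =
  \sum_(i < N) \sum_(j < N) eta i j *
     (T i k a * T j l b - T i k b * T j l a).
Proof.
move=> etaT a b k l.
under eq_bigr do under eq_bigr do rewrite mulrBr.
under [RHS]eq_bigr do under eq_bigr do rewrite mulrBr.
under eq_bigr do rewrite sumrB.
under [RHS]eq_bigr do rewrite sumrB.
rewrite !sumrB; congr (_ - _).
rewrite [RHS]exchange_big /=; apply: eq_bigr => i _; apply: eq_bigr => j _.
by rewrite -{2}etaT mxE [T j k b * _]mulrC.
Qed.

Lemma gauss_ricci_assoc_equiv (F : idomainType) (eta : 'M[F]_N) (c : F)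
    (T : 'I_N -> 'I_N -> 'I_N -> F) :
    eta^T = eta -> c != 0 -> (forall x y z, T x y z = T z y x) ->
  ((forall i j k l : 'I_N,
      \sum_(a < N) \sum_(b < N) (c *: eta) a b *
        (T i k a * T j l b - T i l a * T j k b) = 0) <->
   (forall a b k l : 'I_N,
      \sum_(i < N) \sum_(j < N) eta i j *
        (T i k a * T j l b - T i l a * T j k b) = 0)) /\
  ((forall a b k l : 'I_N,
      \sum_(i < N) \sum_(j < N) eta i j *
        (T i k a * T j l b - T i l a * T j k b) = 0) <->
   (forall m n k l : 'I_N,
      \sum_(i < N) \sum_(j < N) eta i j *
        (T i m k * T j n l - T i m l * T j n k) = 0)).
Proof.
move=> etaT c0 TC; have gaussE := @gauss_sum_ricci F eta c T TC.
have ricciE := @ricci_sum_assoc F eta T etaT.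
split; split.
- move=> gauss a b k l; apply/eqP.
  by rewrite -(mulIr_eq0 _ (mulIf c0)) mulrC -gaussE gauss.
- by move=> ricci i j k l; rewrite gaussE ricci mulr0.
- by move=> ricci m n k l; rewrite -ricciE.
- by move=> assoc a b k l; rewrite ricciE.
Qed.

End AssociativityEquations.

Theorem mainTheorem3 (R : realType) (N : nat) (eta : 'M[R]_N) (c : R)
  (U : set 'rV[R]_N) (Phi : 'rV[R]_N -> R) :
  eta^T = eta -> eta \in unitmx -> c != 0 ->
  open U -> Ck_on 3 U Phi ->
  let mu := c *: eta in
  let psi := fun a : 'I_N => pd a Phi in
  forall u, U u ->
  let Gauss := forall i j k l : 'I_N,
      \sum_(a < N) \sum_(b < N) mu a b *
        (pd i (pd k (psi a)) u * pd j (pd l (psi b)) u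
         - pd i (pd l (psi a)) u * pd j (pd k (psi b)) u) = 0 in
  let Ricci := forall a b k l : 'I_N,
      \sum_(i < N) \sum_(j < N) eta i j *
        (pd i (pd k (psi a)) u * pd j (pd l (psi b)) u
         - pd i (pd l (psi a)) u * pd j (pd k (psi b)) u) = 0 in
  let Assoc := forall m n k l : 'I_N,
      \sum_(i < N) \sum_(j < N) eta i j *
        (pd i (pd m (pd k Phi)) u * pd j (pd n (pd l Phi)) u
         - pd i (pd m (pd l Phi)) u * pd j (pd n (pd k Phi)) u) = 0 in
  (Gauss <-> Ricci) /\ (Ricci <-> Assoc).
Proof.
move=> etaT _ c0 oU PhiC mu psi u Uu Gauss Ricci Assoc.
pose T x y z := pd x (pd y (pd z Phi)) u.
have TC x y z : T x y z = T z y x := Ck_on3_pdC13 oU x y z PhiC Uu.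
exact: gauss_ricci_assoc_equiv etaT c0 TC.
Qed.
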